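(* Let $X,Y$ be Banach spaces over $\mathbb{K}\in\{\mathbb{R},\mathbb{C}\}$, let $G\in L(X,Y)$ with $\|G\|=1$, assume $\|\cdot\|_G$ is a norm on $L(X,Y)$, and let $T\in L(X,Y)$ with $\|T\|_G=1$. Suppose $\varphi\in L(X,Y)^*$ is a weak*-limit of a net $(\psi_{x_\alpha,y_\alpha^*})$, where $(x_\alpha,y_\alpha^* )\subset S_X\times S_{Y^*}$ is a net with $\|Gx_\alpha\|\to1$ and $y_\alpha^*(Tx_\alpha)\to1$. Then $\varphi(T)=1$ and $\|\varphi\|_{G,*}=1$; that is, $\varphi$ is a support functional of $T$ in $(L(X,Y),\|\cdot\|_G)$.
   Context: $S_X$ is the unit sphere of $X$, $Y^*$ the dual of $Y$. For $x\in X$, $y^*\in Y^*$, $\psi_{x,y^*}(S)=y^*(Sx)$ for $S\in L(X,Y)$. The $G$-norm is $\|T\|_G := \inf_{\delta>0}\sup\{\|Tx\|: x\in S_X,\ \|Gx\|>1-\delta\}$, and $\|\cdot\|_{G,*}$ denotes the dual norm on $(L(X,Y),\|\cdot\|_G)^*$. A support functional of $T$ is a functional $f$ of dual norm $1$ with $f(T)=\|T\|_G$. *)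

From HB Require Import structures.
From mathcomp Require Import all_boot all_order all_algebra.
From mathcomp Require Import all_classical all_reals all_analysis.
From mathcomp Require Import complex.
Import Order.TTheory GRing.Theory Num.Theory.
Import numFieldNormedType.Exports.

Set Implicit Arguments.
Unset Strict Implicit.
Unset Printing Implicit Defensive.

Local Open Scope classical_set_scope.
Local Open Scope ring_scope.

(* The scalar field K in {R, C}: KK R false = R, KK R true = R[i] = C. *)
Definition KK (R : realType) (b : bool) : numFieldType :=
  if b then (R[i] : numFieldType) else (R : numFieldType).

Section Defs.
Variable K : numFieldType.

Definition is_lin (V W : normedModType K) (f : V -> W) : Prop :=
  forall (a : K) (u v : V), f (a *: u + v) = a *: f u + f v.

(* L(V,W): bounded (= continuous) linear operators *)
Definition bounded_op (V W : normedModType K) (f : V -> W) : Prop :=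
  is_lin f /\ continuous f.

Definition dual_elt (V : normedModType K) (f : V -> K) : Prop :=
  (forall (a : K) (u v : V), f (a *: u + v) = a * f u + f v) /\ continuous f.

Definition opnorm (V W : normedModType K) (f : V -> W) : K :=
  supremum 0 [set `|f x| | x in [set x : V | `|x| <= 1]].

Definition fnorm (V : normedModType K) (f : V -> K) : K :=
  supremum 0 [set `|f x| | x in [set x : V | `|x| <= 1]].

Definition Gnorm (V W : normedModType K) (G T : V -> W) : K :=
  infimum 0
    [set supremum 0 [set `|T x| | x in [set x : V | `|x| = 1 /\ 1 - d < `|G x|]]
     | d in [set d : K | 0 < d]].

(* ||.||_G is a norm on L(V,W) (it is always a seminorm) *)
Definition Gnorm_is_norm (V W : normedModType K) (G : V -> W) : Prop :=
  forall S : V -> W, bounded_op S -> Gnorm G S = 0 -> S = (fun _ => 0).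

(* phi is an element of L(V,W)^* (w.r.t. the operator norm); L(V,W) is
   represented by the predicate bounded_op on V -> W *)
Definition op_dual_elt (V W : normedModType K) (phi : (V -> W) -> K) : Prop :=
  (forall (a : K) (S1 S2 : V -> W), bounded_op S1 -> bounded_op S2 ->
     phi (fun u => a *: S1 u + S2 u) = a * phi S1 + phi S2) /\
  (exists C : K, forall S : V -> W, bounded_op S -> `|phi S| <= C * opnorm S).

Definition psi (V W : normedModType K) (x : V) (y : W -> K) (S : V -> W) : K :=
  y (S x).

Definition Gdualnorm (V W : normedModType K) (G : V -> W) (phi : (V -> W) -> K) : K :=
  supremum 0 [set `|phi S| | S in [set S : V -> W | bounded_op S /\ Gnorm G S <= 1]].

Definition directed (I : Type) (le : I -> I -> Prop) : Prop :=
  (exists i : I, True) /\ (forall i, le i i) /\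
  (forall i j k, le i j -> le j k -> le i k) /\
  (forall i j, exists k, le i k /\ le j k).

Definition net_cvg (I : Type) (le : I -> I -> Prop) (u : I -> K) (l : K) : Prop :=
  forall e : K, 0 < e -> exists i0 : I, forall i, le i0 i -> `|u i - l| < e.

End Defs.

From HB Require Import structures.
From mathcomp Require Import all_boot all_order all_algebra.
From mathcomp Require Import all_classical all_reals all_analysis.
From mathcomp Require Import complex.
Import Order.TTheory GRing.Theory Num.Theory.
Import numFieldNormedType.Exports.

Set Implicit Arguments.
Unset Strict Implicit.
Unset Printing Implicit Defensive.
Local Open Scope classical_set_scope.
Local Open Scope ring_scope.

(* For every operator S, |phi S| is the limit of |y_a (S x_a)| <= ||S x_a||,
   and eventually x_a lies in {x in S_X : ||G x|| > 1 - d}; hence |phi S| is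
   bounded by every sup defining ||S||_G, so ||phi||_{G,*} <= 1.  The value
   phi T = 1 is the limit of y_a (T x_a), and ||T||_G = 1 makes the bound
   attained. *)

Section SupremumInfimum.
Context {disp : Order.disp_t} {T : porderType disp}.

Lemma supremum_neq_supremums (x0 : T) (A : set T) :
  supremum x0 A != x0 -> supremums A (supremum x0 A).
Proof.
rewrite /supremum; case: ifP => _; first by rewrite eqxx.
by case: xgetP => [_ -> //|_]; rewrite eqxx.
Qed.

Lemma infimum_neq_infimums (x0 : T) (A : set T) :
  infimum x0 A != x0 -> infimums A (infimum x0 A).
Proof.
rewrite /infimum; case: ifP => _; first by rewrite eqxx.
by case: xgetP => [_ -> //|_]; rewrite eqxx.
Qed.

Lemma supremum_attained (x0 m : T) (A : set T) :
  A m -> ubound A m -> supremum x0 A = m.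
Proof.
move=> Am ubm; rewrite /supremum ifF; last by apply/eqP => A0; rewrite A0 in Am.
by apply: xget_subset1; [split=> // z; apply | exact: is_subset1_supremums].
Qed.

End SupremumInfimum.

Definition net_near (I : Type) (le : I -> I -> Prop) (P : I -> Prop) : Prop :=
  exists i0, forall i, le i0 i -> P i.

Section Nets.
Variables (K : numFieldType) (I : Type) (le : I -> I -> Prop).
Hypothesis hI : directed le.
Implicit Types (u : I -> K).

Lemma net_near_and (P Q : I -> Prop) :
  net_near le P -> net_near le Q -> net_near le (fun i => P i /\ Q i).
Proof.
have [_ [_ [trans_le dir_le]]] := hI.
move=> [i1 h1] [i2 h2]; have [k [k1 k2]] := dir_le i1 i2.
by exists k => i ki; split; [apply: h1 | apply: h2]; exact: trans_le ki.
Qed.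

Lemma net_near_ex (P : I -> Prop) : net_near le P -> exists i, P i.
Proof. by have [_ [refl_le _]] := hI; move=> [i0 h]; exists i0; apply: h. Qed.

Lemma net_cvg_unique u l1 l2 : net_cvg le u l1 -> net_cvg le u l2 -> l1 = l2.
Proof.
move=> cv1 cv2; apply/eqP; rewrite -subr_eq0 -normr_eq0; apply: contraT => dl0.
have e0 : 0 < `|l1 - l2| / 2 by rewrite divr_gt0 // lt0r dl0 normr_ge0.
have [i [h1 h2]] := net_near_ex (net_near_and (cv1 _ e0) (cv2 _ e0)).
rewrite distrC in h1.
have := le_lt_trans (ler_distD (u i) l1 l2) (ltrD h1 h2).
by rewrite -splitr ltxx.
Qed.

Lemma net_cvg_norm_le u (l c : K) :
  0 <= c -> net_cvg le u l -> net_near le (fun i => `|u i| <= c) -> `|l| <= c.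
Proof.
move=> c0 cv ub; rewrite real_leNgt ?normr_real ?ger0_real //; apply/negP => cl.
have e0 : 0 < `|l| - c by rewrite subr_gt0.
have [i [hu hc]] := net_near_ex (net_near_and (cv _ e0) ub).
rewrite distrC in hu.
have := ler_distD (u i) l 0; rewrite !subr0 => /le_lt_trans/(_ (ltr_leD hu hc)).
by rewrite subrK ltxx.
Qed.

Lemma net_cvg_gt u l d :
  (forall i, u i - l \is Num.real) -> 0 < d -> net_cvg le u l ->
  net_near le (fun i => l - d < u i).
Proof.
move=> ur d0 cv; have [i0 h] := cv d d0.
by exists i0 => i /h; exact: real_ltr_distlCBl.
Qed.

End Nets.

Section DualElements.
Variable K : numFieldType.

Lemma dual_elt0 (V : normedModType K) (y : V -> K) : dual_elt y -> y 0 = 0.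
Proof.
move=> [hl _]; have := hl 1 0 0; rewrite scaler0 addr0 mul1r => /esym/eqP.
by rewrite -subr_eq0 addrK => /eqP.
Qed.

Lemma dual_eltZ (V : normedModType K) (y : V -> K) (a : K) (w : V) :
  dual_elt y -> y (a *: w) = a * y w.
Proof.
by move=> dy; have := dy.1 a w 0; rewrite addr0 (dual_elt0 dy) addr0.
Qed.

Lemma dual_elt_norm_le (V : normedModType K) (y : V -> K) (w : V) :
  dual_elt y -> fnorm y != 0 -> `|y w| <= fnorm y * `|w|.
Proof.
move=> dy /supremum_neq_supremums[ub _].
have [->|w0] := eqVneq w 0; first by rewrite dual_elt0 // !normr0 mulr0.
have w_gt0 : 0 < `|w| by rewrite normr_gt0.
have : `|y (`|w|^-1 *: w)| <= fnorm y.
  apply: ub; exists (`|w|^-1 *: w) => //.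
  by rewrite /= normrZ ger0_norm ?invr_ge0 // mulVf ?normr_eq0.
rewrite dual_eltZ // normrM ger0_norm ?invr_ge0 //.
by rewrite mulrC ler_pdivrMr.
Qed.

Lemma bounded_op0 (V W : normedModType K) : bounded_op (fun _ : V => 0 : W).
Proof.
by split; [move=> a u v; rewrite scaler0 addr0 | exact: cst_continuous].
Qed.

Lemma op_dual_elt0 (V W : normedModType K) (phi : (V -> W) -> K) :
  op_dual_elt phi -> phi (fun _ => 0) = 0.
Proof.
move=> [hl _]; have := hl 1 _ _ (bounded_op0 V W) (bounded_op0 V W).
have -> : (fun _ : V => 1 *: (0 : W) + 0) = (fun _ => 0).
  by apply: funext => u; rewrite scaler0 addr0.
by rewrite mul1r => /esym/eqP; rewrite -subr_eq0 addrK => /eqP.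
Qed.

End DualElements.

(* [supremum 0] and [infimum 0] return the junk value 0 when the bound does
   not exist; this is why the lemmas below split on whether they vanish. *)
Definition Gsup (K : numFieldType) (V W : normedModType K) (G S : V -> W)
    (d : K) : K :=
  supremum 0 [set `|S z| | z in [set z : V | `|z| = 1 /\ 1 - d < `|G z|]].

Section GNorm.
Variables (K : numFieldType) (V W : normedModType K) (G S : V -> W).

Lemma Gsup_ge0 (d : K) :
  (exists z : V, `|z| = 1 /\ 1 - d < `|G z|) -> 0 <= Gsup G S d.
Proof.
move=> [z zd].
have [-> //|/supremum_neq_supremums[ub _]] := eqVneq (Gsup G S d) 0.
by apply: le_trans (normr_ge0 (S z)) (ub _ _); exists z.
Qed.

Lemma Gnorm_ge0 :
  (forall d : K, 0 < d -> exists z : V, `|z| = 1 /\ 1 - d < `|G z|) ->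
  0 <= Gnorm G S.
Proof.
move=> ex_z; have [-> //|/infimum_neq_infimums[_ glb]] := eqVneq (Gnorm G S) 0.
by apply: glb => _ [d d0 <-]; apply: Gsup_ge0; exact: ex_z.
Qed.

End GNorm.

Section SupportFunctional.
Variables (K : numFieldType) (X Y : normedModType K) (G : X -> Y).
Variables (phi : (X -> Y) -> K) (I : Type) (le : I -> I -> Prop).
Variables (x : I -> X) (y : I -> Y -> K).
Hypothesis hI : directed le.
Hypothesis hx : forall i, `|x i| = 1.
Hypothesis hy : forall i, dual_elt (y i) /\ fnorm (y i) = 1.
Hypothesis hGx : net_cvg le (fun i => `|G (x i)|) 1.
Hypothesis hlim : forall S : X -> Y, bounded_op S ->
  net_cvg le (fun i => psi (x i) (y i) S) (phi S).

Lemma norm_y_le (i : I) (w : Y) : `|y i w| <= `|w|.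
Proof.
have [dy y1] := hy i.
by have := dual_elt_norm_le w dy; rewrite y1 mul1r; apply; rewrite oner_neq0.
Qed.

Lemma near_Gsphere (d : K) :
  0 < d -> net_near le (fun i => `|x i| = 1 /\ 1 - d < `|G (x i)|).
Proof.
move=> d0.
have [i0 h] := net_cvg_gt (fun i => rpredB (normr_real _) (real1 _)) d0 hGx.
by exists i0 => i /h; split.
Qed.

Lemma norm_phi_le_Gsup (S : X -> Y) (d : K) :
  bounded_op S -> 0 < d -> 0 < Gsup G S d -> `|phi S| <= Gsup G S d.
Proof.
move=> hS d0 Gsup_gt0.
have [ub _] := supremum_neq_supremums (lt0r_neq0 Gsup_gt0).
apply: (net_cvg_norm_le hI (ltW Gsup_gt0) (hlim hS)).
have [i0 hi0] := near_Gsphere d0; exists i0 => i /hi0 xi.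
by apply: le_trans (norm_y_le i (S (x i))) (ub _ _); exists (x i).
Qed.

Lemma norm_phi_le_Gnorm (S : X -> Y) :
  Gnorm_is_norm G -> op_dual_elt phi -> bounded_op S -> `|phi S| <= Gnorm G S.
Proof.
move=> hGn hphi hS.
have [G0|GS0] := eqVneq (Gnorm G S) 0.
  by rewrite G0 (hGn S hS G0) op_dual_elt0 // normr0.
have Gnorm_gt0 : 0 < Gnorm G S.
  rewrite lt0r GS0; apply: Gnorm_ge0 => d /near_Gsphere/(net_near_ex hI)[i xi].
  by exists (x i).
have [lb glb] := infimum_neq_infimums GS0.
apply: glb => _ [d d0 <-]; apply: norm_phi_le_Gsup => //.
by apply: lt_le_trans Gnorm_gt0 (lb _ _); exists d.
Qed.

End SupportFunctional.

Theorem lemma3p10 (R : realType) (b : bool)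
    (X Y : completeNormedModType (KK R b))
    (G T : X -> Y)
    (hG : bounded_op G) (hG1 : opnorm G = 1)
    (hGn : Gnorm_is_norm G)
    (hT : bounded_op T) (hT1 : Gnorm G T = 1)
    (phi : (X -> Y) -> KK R b) (hphi : op_dual_elt phi)
    (I : Type) (le : I -> I -> Prop) (hI : directed le)
    (x : I -> X) (y : I -> Y -> KK R b)
    (hx : forall i, `|x i| = 1)
    (hy : forall i, dual_elt (y i) /\ fnorm (y i) = 1)
    (hGx : net_cvg le (fun i => `|G (x i)|) 1)
    (hTx : net_cvg le (fun i => y i (T (x i))) 1)
    (hlim : forall S : X -> Y, bounded_op S ->
              net_cvg le (fun i => psi (x i) (y i) S) (phi S)) :
  phi T = 1 /\ Gdualnorm G phi = 1.
Proof.
have phiT : phi T = 1 := net_cvg_unique hI (hlim T hT) hTx.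
split=> //; apply: supremum_attained.
  by exists T; [split; rewrite ?hT1 | rewrite phiT normr1].
move=> _ [S [hS hS1] <-].
exact: le_trans (norm_phi_le_Gnorm hI hx hy hGx hlim hGn hphi hS) hS1.
Qed.
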